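(* Let $G$ be a 5-vertex-critical $(P_5,\text{chair})$-free graph and let $C=v_1v_2v_3v_4v_5v_1$ be an induced $C_5$ in $G$. Then for every $1\le i\le 5$, the vertex set of every connected component of $G[S^2_3(i)]$ is a homogeneous set of $G$.
   Context: All graphs are finite and simple; $P_5$ is the path on 5 vertices; the chair is a $P_4$ plus a vertex adjacent to exactly one of the two middle vertices of the $P_4$; ''$H$-free'' means no induced subgraph isomorphic to $H$; $G$ is $k$-vertex-critical if $\chi(G)=k$ and $\chi(G-v)<k$ for all $v$. Indices modulo 5. $S^2_3(i)=\{v\in V(G)\setminus V(C): N(v)\cap V(C)=\{v_{i-2},v_i,v_{i+2}\}\}$. A set $H\subseteq V(G)$ is homogeneous if no vertex of $V(G)\setminus H$ is mixed on $H$, i.e. every vertex outside $H$ is adjacent to all or to none of the vertices of $H$. *)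

(* A finite simple graph is a symmetric irreflexive
   relation e on a finType T. *)
From mathcomp Require Import all_boot.
Set Implicit Arguments. Unset Strict Implicit. Unset Printing Implicit Defensive.

Section Graphs.
Variable T : finType.
Variable e : rel T.

Definition simple_graph := symmetric e /\ irreflexive e.

Definition contains_induced (n : nat) (h : rel 'I_n) :=
  exists f : 'I_n -> T, injective f /\ forall i j, e (f i) (f j) = h i j.

Definition free_of (n : nat) (h : rel 'I_n) := ~ contains_induced h.

Definition colorable_on (S : {set T}) (k : nat) :=
  exists c : T -> 'I_k, forall x y, x \in S -> y \in S -> e x y -> c x != c y.

Definition chromatic_number_is (k : nat) :=
  colorable_on setT k /\ ~ colorable_on setT k.-1.

(* k-vertex-critical: chi(G) = k and chi(G - v) < k, i.e. G - v is
   (k-1)-colourable, for every vertex v. *)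
Definition vertex_critical (k : nat) :=
  0 < k /\ chromatic_number_is k /\ forall v : T, colorable_on [set~ v] k.-1.

Definition induced_C5 (v : 'I_5 -> T) :=
  injective v /\
  forall i j : 'I_5, e (v i) (v j) = ((i.+1 %% 5 == j) || (j.+1 %% 5 == i)).

(* S^2_3(i): vertices outside C whose neighbours on C are exactly
   v_{i-2}, v_i, v_{i+2} *)
Definition S23 (v : 'I_5 -> T) (i : 'I_5) : {set T} :=
  [set x | [forall j : 'I_5, x != v j] &&
           [forall j : 'I_5, e x (v j) ==
              [|| (j : nat) == (i + 3) %% 5, j == i | (j : nat) == (i + 2) %% 5]]].

Definition induced_rel (S : {set T}) : rel T :=
  [rel a b | [&& a \in S, b \in S & e a b]].

Definition component (S : {set T}) (x : T) : {set T} :=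
  [set y | connect (induced_rel S) x y].

Definition homogeneous (H : {set T}) :=
  forall z, z \notin H -> (forall y, y \in H -> e z y) \/ (forall y, y \in H -> ~~ e z y).

End Graphs.

Definition P5_rel : rel 'I_5 :=
  fun i j : 'I_5 => ((i : nat).+1 == j) || ((j : nat).+1 == i).

(* chair: P4 0-1-2-3 plus vertex 4 adjacent to exactly the middle vertex 1 *)
Definition chair_rel : rel 'I_5 :=
  fun i j : 'I_5 => [|| [&& (i : nat) < 4, (j : nat) < 4 & (i.+1 == j :> nat) || (j.+1 == i :> nat)],
              ((i : nat) == 4) && ((j : nat) == 1) | ((i : nat) == 1) && ((j : nat) == 4)].

From mathcomp Require Import all_boot zmodp.
Set Implicit Arguments. Unset Strict Implicit. Unset Printing Implicit Defensive.

(* If some vertex z is mixed on a component K of G[S^2_3(i)], then, K being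
   connected, z is mixed on an edge ab of K, and z lies outside S^2_3(i) since
   otherwise it would belong to K.  The cycle C together with a, b and z spans
   a graph on eight vertices which is determined by i and by the neighbourhood
   of z on C; the latter differs from {v_(i-2), v_i, v_(i+2)}.  An exhaustive
   search over the 5 * 31 possible such graphs finds an induced P5 or chair in
   each of them. *)

Section ComponentHomogeneous.
Variables (T : finType) (e : rel T).
Hypothesis e_sym : symmetric e.

Lemma component_homogeneous (S : {set T}) x :
  x \in S ->
  (forall z a b, z \notin S -> a \in S -> b \in S -> e a b -> e z a -> e z b) ->
  homogeneous e (component e S x).
Proof.
move=> xS no_mixed z; rewrite inE => xz.
set R := induced_rel e S.
have [zS | zS] := boolP (z \in S).
  right=> y; rewrite inE => xy; apply: contraNN xz => zy.
  have yS : y \in S.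
    have S_closed : closed R (mem S) by move=> a b /and3P[-> ->].
    by rewrite -(closed_connect S_closed xy).
  by apply: connect_trans xy (connect1 _); apply/and3P; rewrite e_sym.
have zR_closed : closed R (e z).
  move=> a b /and3P[aS bS ab]; apply/idP/idP; apply: no_mixed => //.
  by rewrite e_sym.
have [zx | zx] := boolP (e z x); [left | right] => y; rewrite inE => xy;
  by have := closed_connect zR_closed xy; rewrite !unfold_in /= => <-.
Qed.

End ComponentHomogeneous.

Fixpoint words (A : Type) (n : nat) (s : seq A) : seq (seq A) :=
  if n is n'.+1 then [seq x :: w | x <- s, w <- words n' s] else [:: [::]].

Lemma mem_words (A : eqType) n (s : seq A) w :
  size w = n -> {subset w <= s} -> w \in words n s.
Proof.
elim: n w => [|n IHn] [|x w] //= [size_w] w_s.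
apply: allpairs_f; first by apply: w_s; rewrite mem_head.
by apply: IHn => // y wy; apply: w_s; rewrite inE wy orbT.
Qed.

(* vm_compute evaluates the arguments of [andb] and [orb] eagerly; [has_lazy]
   and the [if]s in [has_word] and [induces_prefix] restore the short-circuits
   on which the pruning and early exit of the search below depend. *)
Fixpoint has_lazy (A : Type) (a : pred A) (s : seq A) : bool :=
  if s is x :: s' then if a x then true else has_lazy a s' else false.

Lemma has_lazyE (A : Type) (a : pred A) s : has_lazy a s = has a s.
Proof. by elim: s => //= x s ->; case: (a x). Qed.

Fixpoint has_word (A : Type) (n : nat) (s : seq A) (P : pred (seq A)) acc :=
  if n is n'.+1 then
    has_lazy (fun x => if P (rcons acc x) then has_word n' s P (rcons acc x) else false) s
  else P acc.

Lemma has_wordP (A : eqType) n (s : seq A) P acc :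
  has_word n s P acc -> exists2 w, (size w == n) && all (mem s) w & P (acc ++ w).
Proof.
elim: n acc => [|n IHn] acc /=; first by exists [::]; rewrite ?cats0.
rewrite has_lazyE => /hasP[x xs]; case: ifP => // _ /IHn[w /andP[size_w w_s]].
rewrite cat_rcons => Pw.
by exists (x :: w); rewrite //= eqSS size_w xs.
Qed.

Definition induces_prefix (r : rel nat) n (h : rel 'I_n.+1) (w : seq nat) :=
  if uniq w then all (fun j => all (fun k =>
    r (nth 0 w j) (nth 0 w k) == h (inZp j) (inZp k)) (iota 0 (size w))) (iota 0 (size w))
  else false.

Definition has_induced_copy (r : rel nat) (vs : seq nat) n (h : rel 'I_n.+1) :=
  has_word n.+1 vs (induces_prefix r h) [::].

Definition twin_free (r : rel nat) (vs : seq nat) :=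
  all (fun p => all (fun q => [|| p == q, r p q | has (fun t => r p t != r q t) vs]) vs) vs.

Section Transfer.
Variables (T : finType) (e : rel T) (g : nat -> T) (r : rel nat) (vs : seq nat).
Hypothesis g_edge : {in vs &, forall p q, e (g p) (g q) = r p q}.

Lemma twin_free_injective : irreflexive e -> twin_free r vs -> {in vs &, injective g}.
Proof.
move=> e_irr /allP r_tf p q p_vs q_vs gpq; apply/eqP.
have /allP/(_ q q_vs)/or3P[// | | /hasP[t t_vs]] := r_tf p p_vs.
  by rewrite -g_edge // gpq e_irr.
by rewrite -!g_edge // gpq eqxx.
Qed.

Lemma contains_induced_copy n (h : rel 'I_n.+1) :
  {in vs &, injective g} -> has_induced_copy r vs h -> contains_induced e h.
Proof.
move=> g_inj /has_wordP[w /andP[/eqP size_w /allP w_vs]].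
rewrite /induces_prefix /=; case: ifP => // uniq_w /allP copy_w.
have nth_vs (j : 'I_n.+1) : nth 0 w j \in vs by apply/w_vs/mem_nth; rewrite size_w.
exists (fun j => g (nth 0 w j)); split=> [j k /g_inj | j k].
  rewrite !nth_vs => /(_ isT isT)/eqP; rewrite nth_uniq ?size_w // => /eqP.
  exact: val_inj.
have in_iota (m : 'I_n.+1) : (m : nat) \in iota 0 (size w).
  by rewrite mem_iota size_w ltn_ord.
rewrite g_edge ?nth_vs // -{2}(valZpK j) -{2}(valZpK k).
by have /allP/(_ k (in_iota k))/eqP := copy_w j (in_iota j).
Qed.

End Transfer.

Definition s23_pattern (i j : nat) : bool :=
  [|| j == (i + 3) %% 5, j == i | j == (i + 2) %% 5].

Definition cycle5 (j k : nat) : bool := (j.+1 %% 5 == k) || (k.+1 %% 5 == j).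

(* Vertices 0..4 form the cycle, 5 and 6 are the ends of an edge of
   G[S^2_3(i)], and 7 is adjacent to 5, not to 6, and to the j-th vertex of
   the cycle iff nth false N j. *)
Definition attachment (i : nat) (N : seq bool) (x j : nat) : bool :=
  if x == 7 then nth false N j else s23_pattern i j.

Definition mixed_edge_config (i : nat) (N : seq bool) (p q : nat) : bool :=
  match p < 5, q < 5 with
  | true, true => cycle5 p q
  | true, false => attachment i N q p
  | false, true => attachment i N p q
  | false, false => (p != q) && ((p == 5) || (q == 5))
  end.

Definition s23_row (i : nat) : seq bool := [seq s23_pattern i j | j <- iota 0 5].

Definition config_forces_P5_or_chair (i : nat) (N : seq bool) : bool :=
  let r := mixed_edge_config i N in
  twin_free r (iota 0 8) &&
  (has_induced_copy r (iota 0 8) P5_rel || has_induced_copy r (iota 0 8) chair_rel).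

Lemma mixed_edge_config_forces_P5_or_chair i N :
  i < 5 -> size N = 5 -> N != s23_row i -> config_forces_P5_or_chair i N.
Proof.
move=> i5 size_N.
have N_bits : N \in words 5 [:: true; false] by apply: mem_words => // -[].
have all_configs : all (fun i => all (fun N =>
    (N != s23_row i) ==> config_forces_P5_or_chair i N)
  (words 5 [:: true; false])) (iota 0 5) by vm_compute.
move/allP/(_ i): all_configs; rewrite mem_iota i5 => /(_ isT)/allP/(_ N N_bits).
exact/implyP.
Qed.

Lemma S23P (T : finType) (e : rel T) (v : 'I_5 -> T) (i : 'I_5) y :
  reflect ((forall j, y != v j) /\ forall j : 'I_5, e y (v j) = s23_pattern i j)
          (y \in S23 e v i).
Proof.
rewrite inE; apply: (iffP andP) => [[/forallP off /forallP pat] | [off pat]].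
  by split=> // j; apply/eqP/pat.
by split; apply/forallP=> // j; rewrite pat.
Qed.

Section MixedEdge.
Variables (T : finType) (e : rel T) (v : 'I_5 -> T) (i : 'I_5) (a b z : T).
Hypotheses (e_sym : symmetric e) (e_irr : irreflexive e) (C5 : induced_C5 e v).
Hypotheses (aS : a \in S23 e v i) (bS : b \in S23 e v i) (zS : z \notin S23 e v i).
Hypotheses (ab : e a b) (za : e z a) (zb : ~~ e z b).

Let cyc (p : nat) : T := v (inord p).
Let N := [seq e z (cyc j) | j <- iota 0 5].
Let g (p : nat) : T := if p < 5 then cyc p else nth z [:: a; b] (p - 5).

Let cyc_edge p q : p < 5 -> q < 5 -> e (cyc p) (cyc q) = cycle5 p q.
Proof. by move=> p5 q5; rewrite C5.2 !inordK. Qed.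

Let S23_cyc y q : y \in S23 e v i -> q < 5 -> e y (cyc q) = s23_pattern i q.
Proof. by case/S23P=> _ pat q5; rewrite pat inordK. Qed.

Let z_cyc q : q < 5 -> e z (cyc q) = nth false N q.
Proof. by move=> q5; rewrite (nth_map 0) ?size_iota ?nth_iota. Qed.

Let z_off_cycle j : z != v j.
Proof.
apply/eqP=> zv; case/S23P: aS => _ a_pat; case/S23P: bS => _ b_pat.
by move: zb; rewrite zv e_sym b_pat -a_pat e_sym -zv za.
Qed.

Lemma neighbourhood_not_s23 : N != s23_row i.
Proof.
apply: contraNN zS => /eqP N_pat; apply/S23P; split=> [|j]; first exact: z_off_cycle.
have := z_cyc (ltn_ord j); rewrite /cyc inord_val N_pat => ->.
by rewrite (nth_map 0) ?size_iota ?nth_iota.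
Qed.

Lemma mixed_edge_embedding :
  {in iota 0 8 &, forall p q, e (g p) (g q) = mixed_edge_config i N p q}.
Proof.
have extra x : 5 <= x -> x < 8 -> [\/ x = 5, x = 6 | x = 7].
  by case: x => [|[|[|[|[|[|[|[|[]]]]]]]]]; constructor.
have extra_cyc x j : 5 <= x -> x < 8 -> j < 5 -> e (g x) (cyc j) = attachment i N x j.
  move=> x5 x8 j5; rewrite /g /attachment.
  by case: (extra x x5 x8) => -> /=; [exact: S23_cyc | exact: S23_cyc | exact: z_cyc].
move=> p q; rewrite !mem_iota /= => p8 q8; rewrite /mixed_edge_config.
case: (ltnP p 5) => p5; case: (ltnP q 5) => q5.
- by rewrite /g p5 q5 cyc_edge.
- by rewrite e_sym {2}/g p5 extra_cyc ?q5.
- by rewrite {2}/g q5 extra_cyc ?p5.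
have [->|->|->] := extra p p5 p8; have [->|->|->] := extra q q5 q8;
  by rewrite /g /= ?e_irr ?ab ?za ?(negbTE zb) // e_sym ?ab ?za ?(negbTE zb).
Qed.

Lemma mixed_edge_P5_or_chair : contains_induced e P5_rel \/ contains_induced e chair_rel.
Proof.
have size_N : size N = 5 by rewrite size_map size_iota.
have /andP[twins copies] :=
  mixed_edge_config_forces_P5_or_chair (ltn_ord i) size_N neighbourhood_not_s23.
have g_inj := twin_free_injective mixed_edge_embedding e_irr twins.
by case/orP: copies => /(contains_induced_copy mixed_edge_embedding g_inj); [left | right].
Qed.

End MixedEdge.

Theorem mainTheorem8 (T : finType) (e : rel T) :
  simple_graph e ->
  free_of e P5_rel -> free_of e chair_rel ->
  vertex_critical e 5 ->
  forall v : 'I_5 -> T, induced_C5 e v ->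
  forall (i : 'I_5) (x : T), x \in S23 e v i ->
    homogeneous e (component e (S23 e v i) x).
Proof.
move=> [e_sym e_irr] P5_free chair_free _ v C5 i x xS.
apply: (component_homogeneous e_sym xS) => z a b zS aS bS ab za.
apply/negPn/negP => zb.
by case: (mixed_edge_P5_or_chair e_sym e_irr C5 aS bS zS ab za zb) => [/P5_free | /chair_free].
Qed.
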